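(* Let $d\in C_\Phi$. Then: (1) every $d'\in\mathbb{D}$ reachable from $d$ in the labelled transition system $(\mathbb{D},\mathbb{R}^c)$ lies in $C_\Phi$; (2) for every $\alpha\in\mathrm{Act}$, $U^d_\alpha={\uparrow}(L^d_\alpha\cap U^d_\alpha)$; (3) for every formula $\varphi$ of Hennessy–Milner logic, $(\mathbb{D},d)\models^c\varphi$ implies $(\mathbb{D},d)\models^a\varphi$.
   Context: Fix a finite set $\mathrm{Act}$ of events. For a dcpo $D$, $K(D)$ denotes its compact elements; a bifinite (SFP) domain is an algebraic dcpo in which for each finite $F\subseteq K(D)$ iterated minimal-upper-bound sets are finite and in $K(D)$ and every upper bound of $F$ is above a minimal upper bound. Scott topology: sets $U={\uparrow}(U\cap K(D))$; Lawson topology generated by ${\uparrow}k\setminus{\uparrow}l$, $k,l\in K(D)$. Mixed powerdomain $\mathcal{M}(D)$: pairs $(L,U)$, $L$ Scott-closed, $U$ Lawson-closed upper, $L={\downarrow}(L\cap U)$, ordered by $L\subseteq L'$ and $U'\subseteq U$. $\mathbb{D}$ is the initial solution over bifinite domains of $\mathbb{D}\cong\prod_{\alpha\in\mathrm{Act}}\mathcal{M}(\mathbb{D})$, $d=((L^d_\alpha,U^d_\alpha))_\alpha$, viewed as a mixed transition system $(\mathbb{D},\mathbb{R}^a,\mathbb{R}^c)$ with $(d,\alpha,d')\in\mathbb{R}^a$ iff $d'\in L^d_\alpha$ and $(d,\alpha,d')\in\mathbb{R}^c$ iff $d'\in U^d_\alpha$. Hennessy–Milner logic: $\varphi::=tt\mid\neg\varphi\mid\langle\alpha\rangle\varphi\mid\varphi\wedge\varphi$;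 $[\alpha]\varphi:=\neg\langle\alpha\rangle\neg\varphi$, $\varphi\vee\psi:=\neg(\neg\varphi\wedge\neg\psi)$; empty conjunction $tt$, empty disjunction $\neg tt$. For $m\in\{a,c\}$ ($\neg a=c$, $\neg c=a$): $(\mathbb{D},d)\models^m tt$; $\models^m\neg\varphi$ iff not $\models^{\neg m}\varphi$; $(\mathbb{D},d)\models^m\langle\alpha\rangle\varphi$ iff $(\mathbb{D},d')\models^m\varphi$ for some $(d,\alpha,d')\in\mathbb{R}^m$; $\wedge$ componentwise. $[\![\varphi]\!]^m=\{d : (\mathbb{D},d)\models^m\varphi\}$. Process terms $p::=\mathbf{0}\mid\bot\mid\alpha_{tt}.p\mid\alpha_\bot.p\mid p+p$ (no summand of $+$ equal to $\mathbf{0}$ or $\bot$). Transitions: $\bot\xrightarrow{\gamma}_\bot\bot$ for all $\gamma$; $\alpha_{tt}.p\xrightarrow{\alpha}_{tt}p$; $\alpha_\bot.p\xrightarrow{\alpha}_\bot p$; if $p\xrightarrow{\alpha}_v p'$ then $p+q\xrightarrow{\alpha}_v p'$ and $q+p\xrightarrow{\alpha}_v p'$. Formulas: $\varphi_{\mathbf{0}}=\bigwedge_\alpha\neg\langle\alpha\rangle tt$; $\varphi_\bot=tt$; $\varphi_{\alpha_{tt}.p}=\langle\alpha\rangle\varphi_p\wedge[\alpha]\varphi_p\wedge\bigwedge_{\beta\ne\alpha}\neg\langle\beta\rangle tt$; $\varphi_{\alpha_\bot.p}=[\alpha]\varphi_p\wedge\bigwedge_{\beta\ne\alpha}\neg\langle\beta\rangle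 tt$; $\varphi_{p+q}=\bigwedge\{\langle\alpha\rangle\varphi_{r'} : p+q\xrightarrow{\alpha}_{tt}r'\}\wedge\bigwedge_\alpha[\alpha]\bigvee\{\varphi_{r'} : p+q\xrightarrow{\alpha}_v r',\ v\in\{\bot,tt\}\}$. For $w=\delta_1\cdots\delta_n\in\mathrm{Act}^*$, $\alpha\in\mathrm{Act}$, term $p$: $\psi_{w,\alpha,p}=[\delta_1]\cdots[\delta_n](\langle\alpha\rangle\varphi_p\vee\neg\langle\alpha\rangle\varphi_p)$; $\Phi$ is the set of all such formulas; $C_\Phi=\bigcap_{\psi\in\Phi}[\![\psi]\!]^a$. *)

From Stdlib Require Import List.
From mathcomp Require Import all_boot.
Set Implicit Arguments.
Unset Strict Implicit.
Unset Printing Implicit Defensive.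

Section Order.
Variables (T : Type) (le : T -> T -> Prop).

Definition is_partial_order : Prop :=
  (forall x, le x x) /\
  (forall x y z, le x y -> le y z -> le x z) /\
  (forall x y, le x y -> le y x -> x = y).

Definition directed (S : T -> Prop) : Prop :=
  (exists x, S x) /\
  (forall x y, S x -> S y -> exists z, S z /\ le x z /\ le y z).

Definition is_sup (S : T -> Prop) (s : T) : Prop :=
  (forall x, S x -> le x s) /\
  (forall u, (forall x, S x -> le x u) -> le s u).

Definition is_dcpo : Prop :=
  is_partial_order /\ forall S, directed S -> exists s, is_sup S s.

Definition compact (k : T) : Prop :=
  forall S s, directed S -> is_sup S s -> le k s -> exists x, S x /\ le k x.

Definition algebraic : Prop :=
  is_dcpo /\
  forall x, directed (fun k => compact k /\ le k x) /\
            is_sup (fun k => compact k /\ le k x) x.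

Definition up (A : T -> Prop) : T -> Prop := fun y => exists x, A x /\ le x y.
Definition down (A : T -> Prop) : T -> Prop := fun y => exists x, A x /\ le y x.
Definition upper_set (A : T -> Prop) : Prop := forall x y, A x -> le x y -> A y.

Definition ub (F : seq T) (u : T) : Prop := forall x, List.In x F -> le x u.
Definition mub (F : seq T) (m : T) : Prop :=
  ub F m /\ forall u, ub F u -> le u m -> u = m.

Inductive mub_closure (F : seq T) : T -> Prop :=
| mubc_base x : List.In x F -> mub_closure F x
| mubc_step (G : seq T) m :
    (forall g, List.In g G -> mub_closure F g) -> mub G m -> mub_closure F m.

Definition bifinite : Prop :=
  algebraic /\
  forall F : seq T, (forall x, List.In x F -> compact x) ->
    (forall u, ub F u -> exists m, mub F m /\ le m u) /\
    (exists l : seq T, forall x, mub_closure F x -> List.In x l) /\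
    (forall x, mub_closure F x -> compact x).

Definition scott_open (O : T -> Prop) : Prop :=
  forall x, O x <-> exists k, compact k /\ O k /\ le k x.
Definition scott_closed (C : T -> Prop) : Prop := scott_open (fun x => ~ C x).

(* Lawson topology: generated (as subbasis) by up k \ up l, k, l compact *)
Definition lawson_open (O : T -> Prop) : Prop :=
  forall x, O x -> exists gs : seq (T * T),
    (forall g, List.In g gs -> compact g.1 /\ compact g.2) /\
    (forall g, List.In g gs -> le g.1 x /\ ~ le g.2 x) /\
    (forall y, (forall g, List.In g gs -> le g.1 y /\ ~ le g.2 y) -> O y).
Definition lawson_closed (C : T -> Prop) : Prop := lawson_open (fun x => ~ C x).

Definition scott_closure (A : T -> Prop) : T -> Prop :=
  fun y => forall C, scott_closed C -> (forall x, A x -> C x) -> C y.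

(* Mixed powerdomain (elements as raw pairs + validity predicate)     *)
Definition Mvalid (p : (T -> Prop) * (T -> Prop)) : Prop :=
  scott_closed p.1 /\ lawson_closed p.2 /\ upper_set p.2 /\
  (forall x, p.1 x <-> down (fun y => p.1 y /\ p.2 y) x).

Definition Mle (p q : (T -> Prop) * (T -> Prop)) : Prop :=
  (forall x, p.1 x -> q.1 x) /\ (forall x, q.2 x -> p.2 x).

Definition Meq (p q : (T -> Prop) * (T -> Prop)) : Prop :=
  (forall x, p.1 x <-> q.1 x) /\ (forall x, p.2 x <-> q.2 x).

End Order.

Definition Mmap (T : Type) (le : T -> T -> Prop) (f : T -> T)
    (p : (T -> Prop) * (T -> Prop)) : (T -> Prop) * (T -> Prop) :=
  (scott_closure le (fun y => exists x, p.1 x /\ y = f x),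
   up le (fun y => exists x, p.2 x /\ y = f x)).

(* approximants Phi^n(bottom) of the identity, where
   Phi(f) = fold o (prod_alpha M(f)) o unfold *)
Fixpoint approx (Act : Type) (T : Type) (le : T -> T -> Prop)
    (unf : T -> Act -> (T -> Prop) * (T -> Prop))
    (fld : (Act -> (T -> Prop) * (T -> Prop)) -> T) (n : nat) : T -> T :=
  match n with
  | 0 => fun _ => fld (fun _ => ((fun _ => False), (fun _ => True)))
  | n'.+1 => fun x => fld (fun a => Mmap le (approx le unf fld n') (unf x a))
  end.

(* The initial solution D ~= prod_{alpha in Act} M(D) over bifinite    *)
(* domains, characterized (up to isomorphism) by minimal invariance:   *)
(* id_D is the least fixed point sup_n Phi^n(bot).                     *)
Record mixed_domain (Act : finType) := MixedDomain {
  car :> Type;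
  le : car -> car -> Prop;
  unf : car -> Act -> (car -> Prop) * (car -> Prop);
  fld : (Act -> (car -> Prop) * (car -> Prop)) -> car;
  le_bifinite : bifinite le;
  unf_valid : forall x a, Mvalid le (unf x a);
  fld_unf : forall x, fld (unf x) = x;
  unf_fld : forall t, (forall a, Mvalid le (t a)) ->
              forall a, Meq (unf (fld t) a) (t a);
  le_unf : forall x y, le x y <-> forall a, Mle (unf x a) (unf y a);
  min_inv : forall x, is_sup le (fun y => exists n, y = approx le unf fld n x) x
}.

Section MTS.
Variables (Act : finType) (D : mixed_domain Act).

Definition L (d : D) (a : Act) : D -> Prop := (unf d a).1.
Definition U (d : D) (a : Act) : D -> Prop := (unf d a).2.

Inductive mode := Ma | Mc.
Definition mneg (m : mode) : mode := match m with Ma => Mc | Mc => Ma end.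

Definition R (m : mode) (d : D) (a : Act) (d' : D) : Prop :=
  match m with Ma => L d a d' | Mc => U d a d' end.

Inductive reach_c (d : D) : D -> Prop :=
| reach_refl : reach_c d d
| reach_step d1 a d2 : reach_c d d1 -> R Mc d1 a d2 -> reach_c d d2.
End MTS.

Inductive form (Act : Type) :=
| FTT
| FNeg of form Act
| FDia of Act & form Act
| FAnd of form Act & form Act.
Arguments FTT {Act}.

Definition FBox (Act : Type) (a : Act) (f : form Act) : form Act :=
  FNeg (FDia a (FNeg f)).
Definition FOr (Act : Type) (f g : form Act) : form Act :=
  FNeg (FAnd (FNeg f) (FNeg g)).
Definition big_and (Act : Type) (l : seq (form Act)) : form Act :=
  foldr (@FAnd Act) FTT l.
Definition big_or (Act : Type) (l : seq (form Act)) : form Act :=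
  FNeg (big_and (map (@FNeg Act) l)).

Fixpoint sat (Act : finType) (D : mixed_domain Act) (m : mode) (d : D)
    (f : form Act) : Prop :=
  match f with
  | FTT => True
  | FNeg g => ~ sat (mneg m) d g
  | FDia a g => exists d', R m d a d' /\ sat m d' g
  | FAnd g h => sat m d g /\ sat m d h
  end.

Inductive proc (Act : Type) :=
| PZero
| PBot
| PPreT of Act & proc Act     (* alpha_tt . p *)
| PPreB of Act & proc Act     (* alpha_bot . p *)
| PSum of proc Act & proc Act.

Definition not_basic (Act : Type) (p : proc Act) : Prop :=
  match p with PZero | PBot => False | _ => True end.

Fixpoint wf_proc (Act : Type) (p : proc Act) : Prop :=
  match p with
  | PZero | PBot => True
  | PPreT _ q | PPreB _ q => wf_proc q
  | PSum q r => wf_proc q /\ wf_proc r /\ not_basic q /\ not_basic r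
  end.

(* [aux p] = (phi_p, list of transitions (alpha, v, phi_{p'}) for p -alpha->_v p'),
   v = true meaning tt and v = false meaning bot. *)
Fixpoint aux (Act : finType) (p : proc Act) : form Act * seq (Act * bool * form Act) :=
  match p with
  | PZero => (big_and [seq FNeg (FDia a FTT) | a <- enum Act], [::])
  | PBot => (FTT, [seq (g, false, FTT) | g <- enum Act])
  | PPreT a q =>
      let f := (aux q).1 in
      (FAnd (FDia a f) (FAnd (FBox a f)
         (big_and [seq FNeg (FDia b FTT) | b <- enum Act & b != a])),
       [:: (a, true, f)])
  | PPreB a q =>
      let f := (aux q).1 in
      (FAnd (FBox a f) (big_and [seq FNeg (FDia b FTT) | b <- enum Act & b != a]),
       [:: (a, false, f)])
  | PSum q r =>
      let tr := (aux q).2 ++ (aux r).2 in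
      (FAnd (big_and [seq FDia t.1.1 t.2 | t <- tr & t.1.2])
            (big_and [seq FBox a (big_or [seq t.2 | t <- tr & t.1.1 == a])
                     | a <- enum Act]),
       tr)
  end.

Definition phi (Act : finType) (p : proc Act) : form Act := (aux p).1.

Definition psi (Act : finType) (w : seq Act) (a : Act) (p : proc Act) : form Act :=
  foldr (@FBox Act) (FOr (FDia a (phi p)) (FNeg (FDia a (phi p)))) w.

Definition C_Phi (Act : finType) (D : mixed_domain Act) (d : D) : Prop :=
  forall (w : seq Act) (a : Act) (p : proc Act), wf_proc p -> sat Ma d (psi w a p).

From Stdlib Require Import List Classical FunctionalExtensionality PropExtensionality.
From mathcomp Require Import all_boot.
Set Implicit Arguments.
Unset Strict Implicit.

(* Part (2) is the heart of the matter: [C_Phi d] forces every [U]-successor [x]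
   of [d] into [L].  By minimal invariance every compact [k <= x] lies below an
   approximant [apx n x] of the identity, and each [apx n] is monotone with
   finite range.  Hence [apx n x] has a characteristic process [s]: every [z]
   with [apx n z <= apx n x] satisfies [phi s] in mode c, and every [y]
   satisfying [phi s] in mode a lies above [apx n x].  Since [x] witnesses
   [<a> phi s] in mode c at [d], the excluded-middle formula [psi [::] a s]
   yields an [L]-successor [y] with [k <= apx n x <= y], and [L] is Scott
   closed.  Part (1) holds because [psi (a :: w) b p = [a] psi w b p], and
   part (3) follows from (1) and (2) by induction on the formula. *)

Section FiniteLists.
Variables (T : Type).

Lemma list_choice (C : Type) (Q : T -> C -> Prop) (l : seq T) :
  exists cs : seq C,
    (forall c, List.In c cs -> exists b, List.In b l /\ Q b c) /\
    (forall b, List.In b l -> (exists c, Q b c) -> exists c, List.In c cs /\ Q b c).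
Proof.
elim: l => [|b l [cs [cs_sound cs_complete]]]; first by exists [::].
case: (classic (exists c, Q b c)) => [[c Qbc]|no_c].
- exists (c :: cs); split.
  + move=> c' [<-|/cs_sound [b' [l_b' Qb'c']]]; first by exists b; split; first left.
    by exists b'; split; first right.
  + move=> b' [<- _|l_b' ex_c]; first by exists c; split; first left.
    by have [c' [cs_c' Qb'c']] := cs_complete b' l_b' ex_c; exists c'; split; first right.
- exists cs; split.
  + by move=> c /cs_sound [b' [l_b' Qb'c]]; exists b'; split; first right.
  + by move=> b' [<- /no_c|l_b'] //; apply: cs_complete.
Qed.

Lemma list_of_pred (P : T -> Prop) (l : seq T) :
  (forall y, P y -> List.In y l) -> exists l', forall y, P y <-> List.In y l'.
Proof.
move=> Pl; have [l' [l'_sound l'_complete]] := list_choice (fun b c => P b /\ c = b) l.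
exists l' => y; split => [Py|/l'_sound [b [_ [Pb yb]]]]; last by rewrite yb.
by have [c [l'_c [_ <-]]] := l'_complete y (Pl y Py) (ex_intro _ y (conj Py erefl)).
Qed.

Fixpoint powerlist (l : seq T) : seq (seq T) :=
  if l is b :: r then powerlist r ++ List.map (cons b) (powerlist r) else [:: [::]].

Lemma powerlistP (P : T -> Prop) (l : seq T) :
  (forall y, P y -> List.In y l) ->
  exists s, List.In s (powerlist l) /\ forall y, P y <-> List.In y s.
Proof.
elim: l P => [|b r IH] P Pl.
  by exists [::]; split; [left | move=> y; split => // /Pl].
have [s [pow_s Ps]] : exists s, List.In s (powerlist r) /\
    forall y, P y /\ y <> b <-> List.In y s.
  by apply: IH => y [/Pl [->|] //].
case: (classic (P b)) => Pb.
- exists (b :: s); split; first by apply/in_or_app; right; apply: in_map.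
  move=> y; split => [Py|[<- //|/Ps []//]].
  by case: (classic (y = b)) => [->|nyb]; [left | right; apply/Ps].
- exists s; split; first by apply/in_or_app; left.
  move=> y; split => [Py|/Ps []//]; apply/Ps; split => // yb.
  by apply: Pb; rewrite -yb.
Qed.

Lemma finite_subpreds (l : seq T) :
  exists Ps : seq (T -> Prop), forall P, (forall y, P y -> List.In y l) -> List.In P Ps.
Proof.
exists (List.map (fun s y => List.In y s) (powerlist l)) => P /powerlistP [s [pow_s Ps]].
have -> : P = (fun y => List.In y s).
  by apply: functional_extensionality => y; apply: propositional_extensionality.
exact: (in_map (fun s y => List.In y s)).
Qed.

End FiniteLists.

(* [in_map_iff] and [filter_In] as views on [seq] comprehensions, which unification
   would otherwise unfold when the list is a [cons]. *)
Lemma In_seq_map (A B : Type) (f : A -> B) (l : seq A) y :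
  List.In y [seq f x | x <- l] <-> exists x, f x = y /\ List.In x l.
Proof. exact: in_map_iff. Qed.

Lemma In_seq_filter (A : Type) (p : pred A) (l : seq A) x :
  List.In x [seq y <- l | p y] <-> List.In x l /\ p x.
Proof. exact: filter_In. Qed.

Lemma In_enum (A : finType) (a : A) : List.In a (enum A).
Proof.
have : a \in enum A by rewrite mem_enum.
by elim: (enum A) => //= b s IH; rewrite inE => /orP [/eqP ->|/IH]; [left | right].
Qed.

Lemma finite_functions (A : finType) (V : Type) (v0 : V) (lv : seq V) :
  exists lf : seq (A -> V), forall f, (forall a, List.In (f a) lv) -> List.In f lf.
Proof.
have agree_on (s : seq A) : exists lf : seq (A -> V), forall f,
    (forall a, List.In (f a) lv) -> exists g, List.In g lf /\ forall a, List.In a s -> f a = g a.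
  elim: s => [|b s [lf lfP]].
    by exists [:: fun _ => v0] => f _; exists (fun _ => v0); split; first left.
  pose upd (g : A -> V) (v : V) := fun a => if a == b then v else g a.
  exists (List.flat_map (fun g => List.map (upd g) lv) lf) => f f_lv.
  have [g [lf_g fg]] := lfP f f_lv.
  exists (upd g (f b)); split; first by apply/in_flat_map; exists g; split; last exact: in_map.
  by move=> a [<-|s_a]; rewrite /upd; [rewrite eqxx | case: eqP => [->|_]; last exact: fg].
have [lf lfP] := agree_on (enum A); exists lf => f /lfP [g [lf_g fg]].
by have -> : f = g by apply: functional_extensionality => a; apply/fg/In_enum.
Qed.

Section ScottClosure.
Variables (T : Type) (le : T -> T -> Prop).
Hypothesis le_transitive : forall x y z, le x y -> le y z -> le x z.

Lemma scott_closed_down (C : T -> Prop) x y : scott_closed le C -> C y -> le x y -> C x.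
Proof.
move=> closedC Cy xy; apply: NNPP => /(proj1 (closedC x)) [k [ck [nCk kx]]].
by apply: (proj2 (closedC y)) Cy; exists k; split => //; split => //; apply: le_transitive kx xy.
Qed.

Lemma scott_closure_closed (A : T -> Prop) : scott_closed le (scott_closure le A).
Proof.
move=> x; split => [nAx|[k [_ [nk kx]]] Ax].
- apply: NNPP => no_k; apply: nAx => C closedC AinC; apply: NNPP => /(proj1 (closedC x)).
  move=> [k [ck [nCk kx]]]; apply: no_k; exists k; split => //; split => // Ak.
  exact: nCk (Ak C closedC AinC).
- by apply: nk => C closedC AinC; apply: scott_closed_down closedC (Ax C closedC AinC) kx.
Qed.

End ScottClosure.

Section AlgebraicDcpo.
Variables (T : Type) (le : T -> T -> Prop).
Hypothesis le_alg : algebraic le.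

Lemma alg_refl x : le x x.
Proof. by case: le_alg => [[[refl _] _] _]. Qed.

Lemma alg_trans x y z : le x y -> le y z -> le x z.
Proof. by case: le_alg => [[[_ [trans _]] _] _]; apply: trans. Qed.

Lemma exists_compact_below x : exists k, compact le k /\ le k x.
Proof. by case: le_alg => _ /(_ x) [[[k k_x] _] _]; exists k. Qed.

Lemma compacts_below_directed x k1 k2 :
  compact le k1 -> le k1 x -> compact le k2 -> le k2 x ->
  exists k, compact le k /\ le k x /\ le k1 k /\ le k2 k.
Proof.
move=> ck1 k1x ck2 k2x; case: le_alg => _ /(_ x) [[_ dir] _].
by have [k [[ck kx] [k1k k2k]]] := dir k1 k2 (conj ck1 k1x) (conj ck2 k2x); exists k.
Qed.

Lemma le_of_compacts_below x u : (forall k, compact le k -> le k x -> le k u) -> le x u.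
Proof. by move=> below; case: le_alg => _ /(_ x) [_ [_]]; apply => k []; apply: below. Qed.

(* Induction on [l]: if some compact [k0 <= x] is not below the head [b0],
   directedness of the compacts below [x] lets the tail cover them all. *)
Lemma compacts_below_finite_cover (l : seq T) x :
  (forall k, compact le k -> le k x -> exists b, List.In b l /\ le k b) ->
  exists b, List.In b l /\ le x b.
Proof.
elim: l => [|b0 l IH] cover.
  by have [k [ck kx]] := exists_compact_below x; have [b [[] _]] := cover k ck kx.
case: (classic (forall k, compact le k -> le k x -> le k b0)) => [below_b0|].
  by exists b0; split; [left | apply: le_of_compacts_below].
move=> not_below_b0.
have [k0 [ck0 [k0x nk0b0]]] : exists k0, compact le k0 /\ le k0 x /\ ~ le k0 b0.
  apply: NNPP => none; apply: not_below_b0 => k ck kx; apply: NNPP => nkb0.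
  by apply: none; exists k.
have [b [l_b xb]] : exists b, List.In b l /\ le x b.
  apply: IH => k ck kx.
  have [k' [ck' [k'x [kk' k0k']]]] := compacts_below_directed ck kx ck0 k0x.
  have [b [[<-|l_b] k'b]] := cover k' ck' k'x.
    by case: nk0b0; apply: alg_trans k0k' k'b.
  by exists b; split => //; apply: alg_trans kk' k'b.
by exists b; split; first right.
Qed.

Lemma down_finite_scott_closed (B : T -> Prop) (l : seq T) :
  (forall y, B y -> List.In y l) -> scott_closed le (down le B).
Proof.
move=> /list_of_pred [l' Bl'] x; split => [nBx|[k [_ [nBk kx]]] [b [Bb xb]]].
- apply: NNPP => no_k; apply: nBx.
  have [b [/Bl' Bb xb]] : exists b, List.In b l' /\ le x b.
    apply: compacts_below_finite_cover => k ck kx.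
    have [b [Bb kb]] : down le B k by apply: NNPP => nBk; apply: no_k; exists k.
    by exists b; split => //; apply/Bl'.
  by exists b.
- by apply: nBk; exists b; split => //; apply: alg_trans kx xb.
Qed.

Lemma scott_closure_finite (B : T -> Prop) (l : seq T) x :
  (forall y, B y -> List.In y l) -> scott_closure le B x <-> down le B x.
Proof.
move=> Bl; split => [|[y [By xy]] C closedC BinC].
  apply; first exact: down_finite_scott_closed Bl.
  by move=> y By; exists y; split => //; apply: alg_refl.
exact (scott_closed_down (@alg_trans) closedC (BinC y By) xy).
Qed.

Lemma up_finite_lawson_closed (B : T -> Prop) (l : seq T) :
  (forall y, B y -> List.In y l) -> lawson_closed le (up le B).
Proof.
move=> /list_of_pred [l' Bl'] x nBx.
have [k0 [ck0 k0x]] := exists_compact_below x.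
pose sep b (g : T * T) := [/\ g.1 = k0, compact le g.2, le g.2 b & ~ le g.2 x].
have [gs [gs_sound gs_complete]] := list_choice sep l'.
have sep_ex b : List.In b l' -> exists g, sep b g.
  move=> /Bl' Bb; apply: NNPP => no_g; apply: nBx; exists b; split => //.
  apply: le_of_compacts_below => k ck kb; apply: NNPP => nkx.
  by apply: no_g; exists (k0, k).
exists gs; split; last split.
- by move=> g /gs_sound [b [_ [-> cg _ _]]].
- by move=> g /gs_sound [b [_ [-> _ _ ngx]]].
- move=> y sep_y [b [/Bl' l'_b by_]].
  have [g [gs_g [_ _ gb _]]] := gs_complete b l'_b (sep_ex b l'_b).
  by case: (sep_y g gs_g) => _; apply; apply: alg_trans gb by_.
Qed.

End AlgebraicDcpo.

Definition monotone (T : Type) (le : T -> T -> Prop) (f : T -> T) : Prop :=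
  forall x y, le x y -> le (f x) (f y).

Definition finite_range (A B : Type) (f : A -> B) : Prop :=
  exists l, forall x, List.In (f x) l.

Definition img (T : Type) (f : T -> T) (P : T -> Prop) : T -> Prop :=
  fun y => exists w, P w /\ y = f w.

Section Approximants.
Variables (Act : finType) (D : mixed_domain Act).
Notation leD := (@le Act D).

Definition apx (n : nat) : D -> D := approx leD (@unf Act D) (@fld Act D) n.

Lemma D_algebraic : algebraic leD.
Proof. by case: (le_bifinite D). Qed.

Lemma leD_refl x : leD x x. Proof. exact: (alg_refl D_algebraic). Qed.

Lemma leD_trans x y z : leD x y -> leD y z -> leD x z.
Proof. exact: (alg_trans D_algebraic). Qed.

Lemma L_scott_closed (x : D) a : scott_closed leD (L x a).
Proof. by case: (unf_valid x a). Qed.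

Lemma L_down (x : D) a v w : L x a w -> leD v w -> L x a v.
Proof. by move=> Lw vw; apply: (scott_closed_down (@leD_trans) (L_scott_closed x a) Lw vw). Qed.

Lemma U_up (x : D) a v w : U x a v -> leD v w -> U x a w.
Proof. by case: (unf_valid x a) => _ [_ [U_upper _]]; apply: U_upper. Qed.

Lemma L_below_LU (x : D) a w : L x a w -> exists w', L x a w' /\ U x a w' /\ leD w w'.
Proof.
case: (unf_valid x a) => _ [_ [_ L_down_LU]] /L_down_LU [w' [[Lw' Uw'] ww']].
by exists w'.
Qed.

Lemma apx0_least x y : leD (apx 0 x) y.
Proof.
pose bot := fun _ : Act => ((fun _ : D => False), (fun _ : D => True)).
have bot_valid a : Mvalid leD (bot a).
  split; [|split; [|split]] => //.
  - move=> z; split => [_|_ []].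
    have [k [ck kz]] := exists_compact_below D_algebraic z.
    by exists k; split => //; split => // [].
  - by move=> z nz; case: nz.
  - by move=> z; split => // [[? [[]]]].
apply/le_unf => a; have [unf_L unf_U] := unf_fld bot_valid a.
by split => z; [move/unf_L | move=> _; apply/unf_U].
Qed.

Section ApproxStep.
Variable n : nat.
Hypotheses (apx_mono : monotone leD (apx n)) (apx_fin : finite_range (apx n)).

Lemma img_L_below_LU x a u :
  img (apx n) (L x a) u -> exists w, L x a w /\ U x a w /\ leD u (apx n w).
Proof.
move=> [w [/L_below_LU [w' [Lw' [Uw' ww']]] ->]].
by exists w'; split => //; split => //; apply: apx_mono.
Qed.

Lemma img_finite (P : D -> Prop) : exists l, forall y, img (apx n) P y -> List.In y l.
Proof. by have [l apx_l] := apx_fin; exists l => y [w [_ ->]]. Qed.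

Lemma img_apx_closure_down (P : D -> Prop) z :
  scott_closure leD (img (apx n) P) z <-> down leD (img (apx n) P) z.
Proof. by have [l finP] := img_finite P; apply: (scott_closure_finite D_algebraic _ finP). Qed.

Lemma Mmap_apx_valid x a : Mvalid leD (Mmap leD (apx n) (unf x a)).
Proof.
have [lU finU] := img_finite (U x a).
split; [|split; [|split]].
- exact (scott_closure_closed (@leD_trans) _).
- exact (up_finite_lawson_closed D_algebraic finU).
- by move=> y z [u [Uu uy]] yz; exists u; split => //; apply: leD_trans uy yz.
- move=> z /=; rewrite img_apx_closure_down.
  split => [[u [/img_L_below_LU [w [Lw [Uw uw]]] zu]]|[u [[Lu _] zu]]].
  + have Lw_img : img (apx n) (L x a) (apx n w) by exists w.
    have Uw_img : img (apx n) (U x a) (apx n w) by exists w.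
    exists (apx n w); split; last exact: leD_trans zu uw.
    by split; [apply/img_apx_closure_down|]; exists (apx n w); split => //; apply: leD_refl.
  + move: Lu => /img_apx_closure_down [v [Lv uv]].
    by exists v; split => //; apply: leD_trans zu uv.
Qed.

Lemma unf_apxS x a :
  (forall z, L (apx n.+1 x) a z <-> down leD (img (apx n) (L x a)) z) /\
  (forall z, U (apx n.+1 x) a z <-> up leD (img (apx n) (U x a)) z).
Proof.
have [unf_L unf_U] := unf_fld (Mmap_apx_valid x) a.
by split => z; [rewrite -img_apx_closure_down; apply: unf_L | apply: unf_U].
Qed.

Lemma apxS_monotone : monotone leD (apx n.+1).
Proof.
move=> x y /le_unf xy; apply/le_unf => a; have [xyL xyU] := xy a.
have [xL xU] := unf_apxS x a; have [yL yU] := unf_apxS y a.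
split => z.
- move=> /xL [_ [[w [Lw ->]] zw]]; apply/yL.
  by exists (apx n w); split => //; exists w; split => //; apply: xyL.
- move=> /yU [_ [[w [Uw ->]] wz]]; apply/xU.
  by exists (apx n w); split => //; exists w; split => //; apply: xyU.
Qed.

Lemma apxS_finite_range : finite_range (apx n.+1).
Proof.
have [l apx_l] := apx_fin.
have [Ps subPs] := finite_subpreds l.
have [lf lfP] := finite_functions Act (fun _ : D => False, fun _ : D => False)
  (List.list_prod Ps Ps).
pose build (k : Act -> (D -> Prop) * (D -> Prop)) : D :=
  fld (fun a => (scott_closure leD (k a).1, up leD (k a).2)).
exists (List.map build lf) => x.
have -> : apx n.+1 x = build (fun a => (img (apx n) (L x a), img (apx n) (U x a))) by [].
by apply/in_map/lfP => a; apply: in_prod; apply: subPs => y [w [_ ->]].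
Qed.

End ApproxStep.

Lemma apx_monotone_finite n : monotone leD (apx n) /\ finite_range (apx n).
Proof.
elim: n => [|n [mono fin]]; last by split; [apply: apxS_monotone | apply: apxS_finite_range].
split; first by move=> x y _; apply: apx0_least.
by exists [:: @fld Act D (fun _ => (fun _ => False, fun _ => True))] => x; left.
Qed.

Lemma apx_monotone n : monotone leD (apx n).
Proof. by case: (apx_monotone_finite n). Qed.

Lemma apx_finite_range n : finite_range (apx n).
Proof. by case: (apx_monotone_finite n). Qed.

Lemma L_apxS n x a z : L (apx n.+1 x) a z <-> down leD (img (apx n) (L x a)) z.
Proof. exact: (proj1 (unf_apxS (apx_monotone n) (apx_finite_range n) x a)). Qed.

Lemma U_apxS n x a z : U (apx n.+1 x) a z <-> up leD (img (apx n) (U x a)) z.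
Proof. exact: (proj2 (unf_apxS (apx_monotone n) (apx_finite_range n) x a)). Qed.

Lemma apx_le_apxS n x : leD (apx n x) (apx n.+1 x).
Proof.
elim: n x => [|n IH] x; first exact: apx0_least.
apply/le_unf => a; split => z.
- move=> /L_apxS [u [[w [Lw ->]] zu]]; apply/L_apxS.
  by exists (apx n.+1 w); split; [exists w | apply: leD_trans zu (IH w)].
- move=> /U_apxS [u [[w [Uw ->]] uz]]; apply/U_apxS.
  by exists (apx n w); split; [exists w | apply: leD_trans (IH w) uz].
Qed.

Lemma compact_below_apx k x : compact leD k -> leD k x -> exists n, leD k (apx n x).
Proof.
move=> ck kx.
have apx_chain : {homo apx^~ x : i j / i <= j >-> leD i j}.
  by apply: homo_leq => [y|y u v|i]; [apply: leD_refl | apply: leD_trans | apply: apx_le_apxS].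
have apx_directed : directed leD (fun y => exists n, y = apx n x).
  split; first by exists (apx 0 x), 0.
  move=> _ _ [i ->] [j ->]; exists (apx (maxn i j) x).
  by split; [exists (maxn i j) | split; apply: apx_chain; rewrite ?leq_maxl ?leq_maxr].
by have [_ [[n ->] kn]] := ck _ _ apx_directed (min_inv x) kx; exists n.
Qed.

End Approximants.

Section Satisfaction.
Variables (Act : finType) (D : mixed_domain Act).
Implicit Types (m : mode) (z : D).

Lemma mnegK m : mneg (mneg m) = m.
Proof. by case: m. Qed.

Lemma sat_big_and m z l : sat m z (big_and l) <-> forall f, List.In f l -> sat m z f.
Proof.
elim: l => [|f l IH] //=; split => [[zf /IH zl] g [<-|/zl]|zfl] //.
by split; [apply: zfl; left | apply/IH => g lg; apply: zfl; right].
Qed.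

Lemma sat_big_or m z l : sat m z (big_or l) <-> exists f, List.In f l /\ sat m z f.
Proof.
rewrite /big_or /= sat_big_and; split => [none_neg|[f [lf zf]] all_neg].
- apply: NNPP => none; apply: none_neg => _ /In_seq_map [f [<- lf]] /=.
  by rewrite mnegK => zf; apply: none; exists f.
- by apply: (all_neg (FNeg f)); [apply: in_map | rewrite /= mnegK].
Qed.

Lemma sat_box m z a f : sat m z (FBox a f) <-> forall v, R (mneg m) z a v -> sat m v f.
Proof.
rewrite /FBox /=; split => [no_bad v zv|all_good [v [zv]]].
  by apply: NNPP => nvf; apply: no_bad; exists v; rewrite mnegK.
by rewrite /= mnegK; apply; apply: all_good.
Qed.

Definition transitions (p : proc Act) : seq (Act * bool * form Act) := (aux p).2.

Lemma sat_phi_zero m z : sat m z (phi (PZero Act)) <-> forall a v, ~ R (mneg m) z a v.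
Proof.
rewrite /phi /= sat_big_and.
split => [no_dia a v zv|no_succ _ /In_seq_map [a [<- _]] [v [zv _]]].
  by apply: (no_dia (FNeg (FDia a FTT))); [apply/in_map/In_enum | exists v].
exact: no_succ zv.
Qed.

Lemma sat_phi_sum m z q r :
  sat m z (phi (PSum q r)) <->
  (forall t, List.In t (transitions (PSum q r)) -> t.1.2 ->
     exists v, R m z t.1.1 v /\ sat m v t.2) /\
  (forall a v, R (mneg m) z a v ->
     exists t, List.In t (transitions (PSum q r)) /\ t.1.1 = a /\ sat m v t.2).
Proof.
set tr := transitions _.
have -> : phi (PSum q r) = FAnd (big_and [seq FDia t.1.1 t.2 | t <- tr & t.1.2])
  (big_and [seq FBox a (big_or [seq t.2 | t <- tr & t.1.1 == a]) | a <- enum Act]) by [].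
split => [[/sat_big_and dias /sat_big_and boxes]|[dias boxes]].
- split => [t tr_t t_tt|a v zv].
    by apply: (dias (FDia t.1.1 t.2)); apply/in_map/In_seq_filter.
  have /sat_box/(_ v zv)/sat_big_or [f [/In_seq_map [t [<- /In_seq_filter [tr_t /eqP ta]]] vt]] :=
    boxes _ (in_map (fun a => FBox a _) _ _ (In_enum a)).
  by exists t.
- split; apply/sat_big_and.
    by move=> _ /In_seq_map [t [<- /In_seq_filter [tr_t t_tt]]]; apply: dias.
  move=> _ /In_seq_map [a [<- _]]; apply/sat_box => v /boxes [t [tr_t [ta vt]]].
  by apply/sat_big_or; exists t.2; split => //; apply/in_map/In_seq_filter; rewrite ta eqxx.
Qed.

(* The head prefix is repeated as the innermost summand, so that every non-empty
   list yields a [PSum] none of whose summands is [0] or [bot]. *)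
Definition prefix_sum (tr : seq (Act * proc Act)) : proc Act :=
  if tr is p :: _ then foldr (fun q t => PSum (PPreT q.1 q.2) t) (PPreT p.1 p.2) tr
  else PZero Act.

Lemma wf_prefix_sum tr : (forall p, List.In p tr -> wf_proc p.2) -> wf_proc (prefix_sum tr).
Proof.
case: tr => [|p r] //= wf_tr.
have wf_fold s : (forall q, List.In q s -> wf_proc q.2) ->
    let t := foldr (fun q t => PSum (PPreT q.1 q.2) t) (PPreT p.1 p.2) s in
    wf_proc t /\ not_basic t.
  elim: s => [|q s IH] wf_s /=; first by split => //; apply: wf_tr; left.
  by have [] := IH (fun q' s_q' => wf_s q' (or_intror s_q')); do !split => //; apply: wf_s; left.
have [] := wf_fold r (fun q r_q => wf_tr q (or_intror r_q)).
by do !split => //; apply: wf_tr; left.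
Qed.

Lemma transitions_prefix_sum p tr :
  transitions (prefix_sum (p :: tr)) = [seq (q.1, true, phi q.2) | q <- p :: tr ++ [:: p]].
Proof.
rewrite /prefix_sum -[p :: tr ++ _]/((p :: tr) ++ _); elim: (p :: tr) => [|q s IH] //=.
by rewrite -IH.
Qed.

Definition realizes m z (tr : seq (Act * proc Act)) : Prop :=
  (forall p, List.In p tr -> exists v, R m z p.1 v /\ sat m v (phi p.2)) /\
  (forall a v, R (mneg m) z a v -> exists p, List.In p tr /\ p.1 = a /\ sat m v (phi p.2)).

Lemma sat_prefix_sum m z tr : sat m z (phi (prefix_sum tr)) <-> realizes m z tr.
Proof.
case: tr => [|p r].
  rewrite sat_phi_zero; split => [no_succ|[_ succ] a v /succ [? [[]]]].
  by split => // a v /no_succ.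
rewrite sat_phi_sum -[PSum _ _]/(prefix_sum (p :: r)) transitions_prefix_sum.
have memP q : List.In q (p :: r ++ [:: p]) <-> List.In q (p :: r).
  rewrite /= in_app_iff /=; tauto.
split => [[dias boxes]|[dias boxes]]; split.
- by move=> q /memP pr_q; apply: (dias (q.1, true, phi q.2)) => //; apply/In_seq_map; exists q.
- move=> a v zv; have [_ [/In_seq_map [q [<- pr_q]] [qa vq]]] := boxes a v zv.
  by exists q; split => //; apply/memP.
- by move=> _ /In_seq_map [q [<- pr_q]] _; apply/dias/memP.
- move=> a v zv; have [q [pr_q [qa vq]]] := boxes a v zv.
  by exists (q.1, true, phi q.2); split => //; apply/In_seq_map; exists q; split => //; apply/memP.
Qed.

End Satisfaction.

Section CharacteristicProcesses.
Variables (Act : finType) (D : mixed_domain Act).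
Notation leD := (@le Act D).

Definition characterizes n (w : D) (s : proc Act) : Prop :=
  (forall z : D, leD (apx n z) (apx n w) -> sat Mc z (phi s)) /\
  (forall y : D, sat Ma y (phi s) -> leD (apx n w) y).

Section PrefixSumStep.
Variables (n : nat) (x : D) (tr : seq (Act * proc Act)).
Hypothesis tr_sound :
  forall p, List.In p tr -> exists w, L x p.1 w /\ U x p.1 w /\ characterizes n w p.2.
Hypothesis tr_complete :
  forall a w, L x a w -> U x a w -> exists s, List.In (a, s) tr /\ characterizes n w s.

Lemma characterizes_prefix_sum : characterizes n.+1 x (prefix_sum tr).
Proof.
split => [z /le_unf zx|y /sat_prefix_sum [dias boxes]].
- apply/sat_prefix_sum; split => [[a s] /tr_sound [w [Lw [Uw [w_sat _]]]]|a v Lv] /=.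
  + have : U (apx n.+1 x) a (apx n w).
      by apply/U_apxS; exists (apx n w); split; [exists w | apply: leD_refl].
    move=> /(proj2 (zx a)) /U_apxS [_ [[v [Uv ->]] vw]].
    by exists v; split => //; apply: w_sat.
  + have : L (apx n.+1 z) a (apx n v).
      by apply/L_apxS; exists (apx n v); split; [exists v | apply: leD_refl].
    move=> /(proj1 (zx a)) /L_apxS [u [/(img_L_below_LU (apx_monotone n)) [w [Lw [Uw uw]]] vu]].
    have [s [tr_s [s_sat _]]] := tr_complete Lw Uw.
    by exists (a, s); split => //; split => //; apply: s_sat; apply: leD_trans vu uw.
- apply/le_unf => a; split => z.
  + move=> /L_apxS [u [/(img_L_below_LU (apx_monotone n)) [w [Lw [Uw uw]]] zu]].
    have [s [tr_s [_ s_below]]] := tr_complete Lw Uw.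
    have [v [Lv vs]] := dias _ tr_s.
    by apply: L_down Lv _; apply: leD_trans zu (leD_trans uw (s_below v vs)).
  + move=> Uz; have [[a' s] [tr_s [/= a'a zs]]] := boxes a z Uz; subst a'.
    have [w [Lw [Uw [_ w_below]]]] := tr_sound tr_s.
    by apply/U_apxS; exists (apx n w); split; [exists w | apply: w_below].
Qed.

End PrefixSumStep.

Lemma exists_characteristic_proc n x : exists s, wf_proc s /\ characterizes n x s.
Proof.
elim: n x => [|n IH] x.
  by exists (PBot Act); split => //; split => // y _; apply: apx0_least.
have [l apx_l] := @apx_finite_range _ D n.
(* One prefix for each pair [(a, apx n w)] with [w] an [L]- and [U]-successor of
   [x]: finitely many, as [apx n] has finite range. *)
pose Q (ag : Act * D) (p : Act * proc Act) := p.1 = ag.1 /\ wf_proc p.2 /\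
  exists w, L x ag.1 w /\ U x ag.1 w /\ apx n w = ag.2 /\ characterizes n w p.2.
have [tr [tr_sound tr_complete]] := list_choice Q (List.list_prod (enum Act) l).
exists (prefix_sum tr); split.
  by apply: wf_prefix_sum => p /tr_sound [_ [_ [_ [wf_p _]]]].
apply: characterizes_prefix_sum.
  by move=> p /tr_sound [[a g] [_ [/= -> [_ [w [Lw [Uw [_ char_w]]]]]]]]; exists w.
move=> a w Lw Uw; have [s [wf_s char_s]] := IH w.
have [|[a' s'] [tr_p [/= a'a [_ [w' [_ [_ [w'w char']]]]]]]] :=
  tr_complete (a, apx n w) (in_prod _ _ _ _ (In_enum a) (apx_l w)).
  by exists (a, s); split => //; split => //; exists w.
by subst a'; exists s'; split => //; move: char'; rewrite /characterizes w'w.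
Qed.

End CharacteristicProcesses.

Section ConsistentStates.
Variables (Act : finType) (D : mixed_domain Act).

Lemma C_Phi_succ (d : D) a d' : C_Phi d -> U d a d' -> C_Phi d'.
Proof. by move=> Cd dd' w b p wf_p; apply: (proj1 (sat_box _ _ _ _) (Cd (a :: w) b p wf_p)). Qed.

Lemma C_Phi_reach (d d' : D) : reach_c d d' -> C_Phi d -> C_Phi d'.
Proof. by elim=> [|d1 a d2 _ IH d1d2] // Cd; apply: C_Phi_succ (IH Cd) d1d2. Qed.

(* [psi [::] a s] is excluded middle for [<a> phi s], read across the two modes. *)
Lemma C_Phi_dia (d : D) a s :
  C_Phi d -> wf_proc s -> sat Mc d (FDia a (phi s)) -> sat Ma d (FDia a (phi s)).
Proof.
move=> Cd wf_s dia_c; apply: NNPP => not_dia_a.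
by apply: (Cd [::] a s wf_s); split => // /(_ dia_c).
Qed.

Lemma C_Phi_U_sub_L (d : D) a x : C_Phi d -> U d a x -> L d a x.
Proof.
move=> Cd Ux; apply: NNPP => /(proj1 (L_scott_closed d a x)) [k [ck [nLk kx]]].
have [n kn] := compact_below_apx ck kx.
have [s [wf_s [s_sat s_below]]] := exists_characteristic_proc n x.
have [|y [Ly ys]] := C_Phi_dia (a := a) Cd wf_s.
  by exists x; split => //; apply/s_sat/leD_refl.
by apply/nLk/(L_down Ly)/(leD_trans kn)/s_below.
Qed.

Lemma C_Phi_sat_c_sat_a f (d : D) : C_Phi d -> sat Mc d f -> sat Ma d f.
Proof.
elim: f d => [|g IH|a g IH|g IHg h IHh] d Cd //=.
- by move=> not_a c; apply/not_a/IH.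
- move=> [v [Uv vg]]; exists v.
  by split; [apply: C_Phi_U_sub_L Uv | apply: IH (C_Phi_succ Cd Uv) vg].
- by move=> [dg dh]; split; [apply: IHg | apply: IHh].
Qed.

End ConsistentStates.

Theorem lemma3p19 (Act : finType) (D : mixed_domain Act) (d : D) :
  C_Phi d ->
  (forall d' : D, reach_c d d' -> C_Phi d') /\
  (forall a : Act, forall x : D, U d a x <-> up (@le _ D) (fun y => L d a y /\ U d a y) x) /\
  (forall f : form Act, sat Mc d f -> sat Ma d f).
Proof.
move=> Cd; split; first by move=> d' /C_Phi_reach; apply.
split; last by move=> f; apply: C_Phi_sat_c_sat_a.
move=> a x; split => [Ux|[y [[_ Uy] yx]]]; last exact: U_up Uy yx.
by exists x; split; [split => //; apply: C_Phi_U_sub_L | apply: leD_refl].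
Qed.
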